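(* The condition \[ r(v)r''(v)+r'(v)\le 1 \quad\text{for all } v\in\big(\overline p_{Q,c}(q_h),\overline p_{Q,c}(q_\ell)\big) \] holds for every choice of $0<q_\ell<q_h<\infty$ and $c$ with $0<c<q_\ell$ (where $Q=[q_\ell,q_h]$) if and only if $r(v)r''(v)+r'(v)\le 1$ for every $v\in(0,1)$ with $\psi(v)>0$.
   Context: Let $F$ be a probability distribution on $[0,1]$ with support $[0,1]$ admitting a twice continuously differentiable density $f:(0,1)\to\mathbb{R}_{>0}$. Define the inverse hazard rate $r(v)=(1-F(v))/f(v)$ and the virtual valuation $\psi(v)=v-r(v)$ on $(0,1)$, and assume $\psi'(v)>0$ whenever $\psi(v)>0$. Given $Q=[q_\ell,q_h]$ with $0<q_\ell<q_h<\infty$ and a cost $c$ with $0<c<q_\ell$, for $q\in Q$ let $p_{Q,c}(q)$ be the unique maximizer over $p\in\mathbb{R}$ of $(p-c)\big(1-F(p/q)\big)$ and $\overline p_{Q,c}(q)=p_{Q,c}(q)/q$. *)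

From Stdlib Require Import Reals.
From Coquelicot Require Import Coquelicot.
Open Scope R_scope.

Definition density_dist (F f : R -> R) : Prop :=
  (forall x, x <= 0 -> F x = 0) /\
  (forall x, 1 <= x -> F x = 1) /\
  (forall x, continuous F x) /\
  (forall v, 0 < v < 1 -> is_derive F v (f v)) /\
  (forall v, 0 < v < 1 -> 0 < f v) /\
  (forall v, 0 < v < 1 -> ex_derive f v) /\
  (forall v, 0 < v < 1 -> ex_derive (Derive f) v) /\
  (forall v, 0 < v < 1 -> continuous (Derive (Derive f)) v).

Definition r (F f : R -> R) (v : R) : R := (1 - F v) / f v.
Definition psi (F f : R -> R) (v : R) : R := v - r F f v.

Definition r1 (F f : R -> R) (v : R) : R := Derive (r F f) v.
Definition r2 (F f : R -> R) (v : R) : R := Derive (Derive (r F f)) v.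

Definition revenue (F : R -> R) (c q p : R) : R := (p - c) * (1 - F (p / q)).

Definition is_opt_price (F : R -> R) (c q p : R) : Prop :=
  forall p', revenue F c q p' <= revenue F c q p.

Definition cond_at (F f : R -> R) (v : R) : Prop :=
  r F f v * r2 F f v + r1 F f v <= 1.

(** The optimal normalized price [x = p/q] is interior and satisfies the
    first-order condition [psi x = c/q].  Since [psi] is increasing wherever it
    is positive, the interval [(p_h/q_h, p_l/q_l)] consists of points where
    [psi] lies above [c/q_h > 0]; conversely a point [v] with [psi v = a > 0]
    lies in that interval for [c = a], [q_h = 2] and [q_l = (a+1)/2], because
    then [psi (p_h/q_h) = a/2 < a < a/q_l = psi (p_l/q_l)]. *)

From Stdlib Require Import Reals Lra.
From Coquelicot Require Import Coquelicot.
Open Scope R_scope.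

Lemma lt_of_is_derive_pos (g dg : R -> R) (a b : R) : a < b ->
  (forall x, a < x < b -> is_derive g x (dg x)) ->
  (forall x, a < x < b -> 0 < dg x) ->
  (forall x, a <= x <= b -> continuous g x) ->
  g a < g b.
Proof.
  intros Hab Hder Hpos Hcont.
  (* [MVT_gen] may return an endpoint, where [dg] is unconstrained. *)
  set (dg' x := if Rlt_dec a x then if Rlt_dec x b then dg x else 1 else 1).
  assert (Hdg' : forall x, 0 < dg' x).
  { intro x; unfold dg'.
    destruct (Rlt_dec a x); [destruct (Rlt_dec x b)|]; try lra; apply Hpos; lra. }
  destruct (MVT_gen g a b dg') as (m & _ & Hm).
  - rewrite Rmin_left, Rmax_right by lra. intros x Hx. unfold dg'.
    destruct (Rlt_dec a x); [destruct (Rlt_dec x b)|]; try lra. now apply Hder.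
  - rewrite Rmin_left, Rmax_right by lra. intros x Hx.
    apply continuity_pt_filterlim, Hcont; lra.
  - pose proof (Hdg' m). nra.
Qed.

Lemma is_derive_pos_right (g : R -> R) (x l : R) : is_derive g x l -> 0 < l ->
  exists d, 0 < d /\ forall h, 0 < h < d -> g x < g (x + h).
Proof.
  intros Hg Hl. apply is_derive_Reals in Hg.
  destruct (Hg (l / 2)) as [d Hd]; [lra|].
  exists d; split; [apply cond_pos|]. intros h Hh.
  assert (Hq : Rabs ((g (x + h) - g x) / h - l) < l / 2).
  { apply Hd; [lra | rewrite Rabs_pos_eq; lra]. }
  apply Rabs_def2 in Hq.
  assert (Hdiff : g (x + h) - g x = (g (x + h) - g x) / h * h) by (field; lra).
  nra.
Qed.

Lemma is_derive_max_eq0 (g : R -> R) (x l : R) : is_derive g x l ->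
  (forall y, g y <= g x) -> l = 0.
Proof.
  intros Hg Hmax. apply is_derive_Reals in Hg.
  exact (deriv_maximum g (x - 1) (x + 1) x (exist _ l Hg) ltac:(lra) ltac:(lra)
           (fun y _ _ => Hmax y)).
Qed.

(* A maximizer of [g] on [[a, b]] lies above [g a], so [g] still increases to
   its right unless it is [b]. *)
Lemma le_of_deriv_pos_above (g : R -> R) (a b : R) : a <= b ->
  (forall x, a <= x <= b -> ex_derive g x) ->
  (forall x, a <= x <= b -> g a <= g x -> 0 < Derive g x) ->
  g a <= g b.
Proof.
  intros Hab Hder Hpos.
  destruct (continuity_ab_maj g a b Hab) as (M & HM & HMab).
  { intros x Hx. apply continuity_pt_filterlim, (ex_derive_continuous g), Hder, Hx. }
  assert (HaM : g a <= g M) by (apply HM; lra).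
  destruct (Req_dec M b) as [<- | HMb]; [exact HaM|].
  destruct (is_derive_pos_right g M (Derive g M)) as (d & Hd & Hright).
  - apply Derive_correct, Hder, HMab.
  - apply Hpos; assumption.
  - set (h := Rmin (d / 2) (b - M)).
    assert (Hh : 0 < h) by (apply Rmin_glb_lt; lra).
    assert (Hhd : h <= d / 2) by apply Rmin_l.
    assert (Hhb : h <= b - M) by apply Rmin_r.
    assert (g (M + h) <= g M) by (apply HM; lra).
    assert (g M < g (M + h)) by (apply Hright; lra).
    lra.
Qed.

Section Distribution.
Variables F f : R -> R.
Hypothesis Hdist : density_dist F f.

Lemma F_lt1 (x : R) : x < 1 -> F x < 1.
Proof.
  destruct Hdist as (F0 & F1 & Fcont & Fder & fpos & _). intros Hx.
  destruct (Rle_dec x 0) as [Hx0 | Hx0]; [rewrite F0; lra|].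
  rewrite <- (F1 1) by lra.
  apply (lt_of_is_derive_pos F f); try lra.
  - intros y Hy; apply Fder; lra.
  - intros y Hy; apply fpos; lra.
  - intros y _; apply Fcont.
Qed.

Lemma F_le1 (x : R) : F x <= 1.
Proof.
  destruct (Rlt_dec x 1) as [Hx | Hx].
  - apply Rlt_le, F_lt1, Hx.
  - destruct Hdist as (_ & F1 & _). rewrite F1; lra.
Qed.

Section Revenue.
Variables c q : R.
Hypotheses (Hc : 0 < c) (Hcq : c < q).

Lemma revenue_le0 (p : R) : p <= c -> revenue F c q p <= 0.
Proof.
  intros Hp. unfold revenue. pose proof (F_le1 (p / q)).
  apply Rmult_le_0_r; lra.
Qed.

Lemma revenue_eq0 (p : R) : q <= p -> revenue F c q p = 0.
Proof.
  destruct Hdist as (_ & F1 & _). intros Hp. unfold revenue.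
  rewrite F1; [ring|]. apply Rle_div_r; lra.
Qed.

Lemma revenue_gt0 (p : R) : c < p < q -> 0 < revenue F c q p.
Proof.
  intros Hp. unfold revenue.
  assert (p / q < 1) by (apply (Rdiv_lt_1 p q); lra).
  pose proof (F_lt1 (p / q)). apply Rmult_lt_0_compat; lra.
Qed.

Lemma is_derive_revenue (p : R) : 0 < p / q < 1 ->
  is_derive (revenue F c q) p (1 - F (p / q) - (p - c) * f (p / q) / q).
Proof.
  destruct Hdist as (_ & _ & _ & Fder & _). intros Hx.
  unfold revenue. auto_derive.
  - exists (f (p / q)). now apply Fder.
  - change (fun x => F x) with F. change (p * / q) with (p / q).
    rewrite (is_derive_unique F (p / q) (f (p / q))) by now apply Fder.
    field. lra.
Qed.

Lemma opt_price_exists : exists p, is_opt_price F c q p.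
Proof.
  destruct Hdist as (_ & _ & Fcont & _).
  destruct (continuity_ab_maj (revenue F c q) c q) as (M & HM & _); [lra| |].
  { intros x _. apply continuity_pt_filterlim. unfold revenue.
    apply (continuous_mult (fun p => p - c) (fun p => 1 - F (p / q))).
    - apply (continuous_minus (fun p => p) (fun _ => c));
        [apply continuous_id | apply continuous_const].
    - apply (continuous_minus (fun _ => 1) (fun p => F (p / q)));
        [apply continuous_const|].
      apply (continuous_comp (fun p => p / q) F); [|apply Fcont].
      apply (continuous_scal_l (fun p => p) (/ q)), continuous_id. }
  exists M. intros p.
  assert (HcM : revenue F c q c <= revenue F c q M) by (apply HM; lra).
  assert (Hrc : revenue F c q c = 0) by (unfold revenue; ring).
  destruct (Rle_dec p c); [pose proof (revenue_le0 p); lra|].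
  destruct (Rle_dec p q); [apply HM; lra|].
  rewrite revenue_eq0; lra.
Qed.

Lemma opt_price_between (p : R) : is_opt_price F c q p -> c < p < q.
Proof.
  intros Hopt.
  assert (Hmid : 0 < revenue F c q ((c + q) / 2)) by (apply revenue_gt0; lra).
  pose proof (Hopt ((c + q) / 2)) as Hp.
  destruct (Rle_dec p c); [pose proof (revenue_le0 p); lra|].
  destruct (Rle_dec q p); [rewrite (revenue_eq0 p) in Hp; lra|].
  lra.
Qed.

Lemma opt_price_normalized (p : R) : is_opt_price F c q p -> 0 < p / q < 1.
Proof.
  intros Hopt. destruct (opt_price_between p Hopt).
  split; [apply Rdiv_lt_0_compat | apply (Rdiv_lt_1 p q)]; lra.
Qed.

Lemma psi_opt_price (p : R) : is_opt_price F c q p -> psi F f (p / q) = c / q.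
Proof.
  intros Hopt. destruct Hdist as (_ & _ & _ & _ & fpos & _).
  pose proof (opt_price_normalized p Hopt) as Hx.
  pose proof (is_derive_max_eq0 _ _ _ (is_derive_revenue p Hx) Hopt) as Hfoc.
  pose proof (fpos (p / q) Hx).
  assert (Hr : 1 - F (p / q) = (p - c) * (f (p / q) / q)) by lra.
  unfold psi, r. rewrite Hr. field. lra.
Qed.

End Revenue.

Lemma psi_lt_id (v : R) : 0 < v < 1 -> psi F f v < v.
Proof.
  destruct Hdist as (_ & _ & _ & _ & fpos & _). intros Hv.
  pose proof (F_lt1 v ltac:(lra)). pose proof (fpos v Hv).
  assert (0 < r F f v) by (apply Rdiv_lt_0_compat; lra).
  unfold psi. lra.
Qed.

Lemma ex_derive_psi (v : R) : 0 < v < 1 -> ex_derive (psi F f) v.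
Proof.
  destruct Hdist as (_ & _ & _ & Fder & fpos & fder & _). intros Hv.
  unfold psi, r. auto_derive. repeat split.
  - exists (f v). now apply Fder.
  - now apply fder.
  - specialize (fpos v Hv). lra.
Qed.

Hypothesis Hreg : forall v, 0 < v < 1 -> psi F f v > 0 -> Derive (psi F f) v > 0.

Lemma psi_le (x y : R) : 0 < x -> x <= y -> y < 1 -> 0 < psi F f x ->
  psi F f x <= psi F f y.
Proof.
  intros Hx Hxy Hy Hpsi. apply le_of_deriv_pos_above; [exact Hxy| |].
  - intros z Hz. apply ex_derive_psi; lra.
  - intros z Hz Hle. apply Hreg; lra.
Qed.

Lemma lt_of_psi_lt (x y : R) : 0 < y -> x < 1 -> 0 < psi F f y ->
  psi F f x < psi F f y -> x < y.
Proof.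
  intros Hy Hx Hpsi Hlt. apply Rnot_le_lt. intros Hyx.
  pose proof (psi_le y x Hy Hyx Hx Hpsi). lra.
Qed.

End Distribution.

Theorem lemma8 (F f : R -> R)
  (Hdist : density_dist F f)
  (Hreg : forall v, 0 < v < 1 -> psi F f v > 0 -> Derive (psi F f) v > 0) :
  (forall ql qh c : R, 0 < ql -> ql < qh -> 0 < c -> c < ql ->
     forall ph pl : R, is_opt_price F c qh ph -> is_opt_price F c ql pl ->
     forall v : R, ph / qh < v < pl / ql -> cond_at F f v)
  <->
  (forall v : R, 0 < v < 1 -> psi F f v > 0 -> cond_at F f v).
Proof.
  split.
  - intros Hcond v Hv Hpsi.
    pose proof (psi_lt_id F f Hdist v Hv) as Hav.
    remember (psi F f v) as a eqn:Ha.
    set (ql := (a + 1) / 2).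
    assert (Hql : a < ql < 1) by (unfold ql; lra).
    destruct (opt_price_exists F f Hdist a 2 Hpsi ltac:(lra)) as [ph Hph].
    destruct (opt_price_exists F f Hdist a ql Hpsi ltac:(lra)) as [pl Hpl].
    apply (Hcond ql 2 a ltac:(lra) ltac:(lra) Hpsi ltac:(lra) ph pl Hph Hpl v).
    pose proof (opt_price_normalized F f Hdist a 2 Hpsi ltac:(lra) ph Hph).
    pose proof (opt_price_normalized F f Hdist a ql Hpsi ltac:(lra) pl Hpl).
    pose proof (psi_opt_price F f Hdist a 2 Hpsi ltac:(lra) ph Hph).
    pose proof (psi_opt_price F f Hdist a ql Hpsi ltac:(lra) pl Hpl).
    assert (a < a / ql) by (apply (Rlt_div_r a a ql); nra).
    split; apply (lt_of_psi_lt F f Hdist Hreg); lra.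
  - intros Hpos ql qh c Hql Hqlh Hc Hcql ph pl Hph Hpl v Hv.
    pose proof (opt_price_normalized F f Hdist c qh Hc ltac:(lra) ph Hph).
    pose proof (opt_price_normalized F f Hdist c ql Hc Hcql pl Hpl).
    pose proof (psi_opt_price F f Hdist c qh Hc ltac:(lra) ph Hph).
    assert (0 < c / qh) by (apply Rdiv_lt_0_compat; lra).
    pose proof (psi_le F f Hdist Hreg (ph / qh) v ltac:(lra) ltac:(lra) ltac:(lra) ltac:(lra)).
    apply Hpos; lra.
Qed.
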